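(* Let $G$ be a graph on vertex set $\{1,\dots,N\}$ with independence number $\alpha(G)$, and let $\beta(G)$ be the minimum $d$ such that there exist unit vectors $\ket{\psi_1},\dots,\ket{\psi_N}\in\mathbb{C}^d$ with $\langle\psi_x|\psi_y\rangle=0$ whenever $x,y$ are adjacent in $G$. Consider the equality problem defined by $G$: Alice receives $x$, Bob receives $y$, with the promise that $x=y$ or $x\in G_y$ (the neighbourhood of $y$); Bob outputs $z\in\{1,2\}$ and the success metric is $\mathcal{S}=\frac{1}{\sum_xN_x+N}\sum_y\big(p(1|y,y)+\sum_{x\in G_y}p(2|x,y)\big)$ with $N_x=|G_x|$. Then there exists a quantum protocol achieving $\mathcal{S}=1$ with quantum distinguishability $\mathcal{D}_Q$ such that every classical protocol achieving $\mathcal{S}=1$ has classical distinguishability $\mathcal{D}_C$ satisfying $$\frac{\mathcal{D}_C}{\mathcal{D}_Q}\ge\frac{N}{\alpha(G)\beta(G)}.$$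
   Context: Quantum protocol: Alice sends density operators $\rho_x$ on $\mathbb{C}^{k}$ (any $k$), Bob measures POVMs $\{M_{z|y}\}_z$, $p(z|x,y)=\operatorname{tr}(\rho_xM_{z|y})$; quantum distinguishability $\mathcal{D}_Q=\max_{\{M_x\}}\frac1N\sum_x\operatorname{tr}(\rho_xM_x)$ over POVMs. Classical protocol: encoding $p_e(m|x)$ over messages from a finite set of arbitrary size, decoding $p_d(z|y,m)$, $p(z|x,y)=\sum_mp_e(m|x)p_d(z|y,m)$; classical distinguishability $\mathcal{D}_C=\frac1N\sum_m\max_xp_e(m|x)$. *)

From HB Require Import structures.
From mathcomp Require Import all_boot all_order all_algebra.
From mathcomp Require Import boolp classical_sets reals.
From mathcomp Require Import complex.
Set Implicit Arguments. Unset Strict Implicit. Unset Printing Implicit Defensive.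
Import Order.TTheory GRing.Theory Num.Theory.
Local Open Scope ring_scope.

Section Defs.
Variable R : realType.
Local Notation C := (R[i]).

(* A graph on vertices 'I_N is a symmetric irreflexive relation G. *)
Definition independent (N : nat) (G : rel 'I_N) (S : {set 'I_N}) : bool :=
  [forall x in S, forall y in S, ~~ G x y].

Definition alpha (N : nat) (G : rel 'I_N) : nat :=
  \max_(S : {set 'I_N} | independent G S) #|S|.

Definition inner (d : nat) (u v : 'cV[C]_d) : C := \sum_i (u i 0)^* * v i 0.

Definition has_orth_rep (N : nat) (G : rel 'I_N) (d : nat) : Prop :=
  exists psi : 'I_N -> 'cV[C]_d,
    (forall x, inner (psi x) (psi x) = 1) /\
    (forall x y, G x y -> inner (psi x) (psi y) = 0).

Definition is_beta (N : nat) (G : rel 'I_N) (b : nat) : Prop :=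
  has_orth_rep G b /\ forall d, has_orth_rep G d -> (b <= d)%N.

Definition conjtr (k : nat) (A : 'M[C]_k) : 'M[C]_k := (map_mx Num.conj A)^T.

Definition psd (k : nat) (A : 'M[C]_k) : Prop :=
  conjtr A = A /\ forall v : 'cV[C]_k, 0 <= inner v (A *m v).

Definition density (k : nat) (rho : 'M[C]_k) : Prop := psd rho /\ \tr rho = 1.

Definition povm (I : finType) (k : nat) (M : I -> 'M[C]_k) : Prop :=
  (forall i, psd (M i)) /\ \sum_i M i = 1%:M.

(* p(z|x,y) = tr(rho_x M_{z|y})   (real part; the trace is real here) *)
Definition qprob (N k : nat) (rho : 'I_N -> 'M[C]_k) (M : 'I_N -> 'I_2 -> 'M[C]_k)
  (z : 'I_2) (x y : 'I_N) : R := complex.Re (\tr (rho x *m M y z)).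

Definition DQ (N k : nat) (rho : 'I_N -> 'M[C]_k) : R :=
  sup [set v : R | exists E : 'I_N -> 'M[C]_k,
         povm E /\ v = N%:R^-1 * \sum_x complex.Re (\tr (rho x *m E x))]%classic.

(* messages in 'I_m (finite set of arbitrary size m);
   pe x m = p_e(m|x), pd y m z = p_d(z|y,m) *)
Definition stoch (I J : finType) (p : I -> J -> R) : Prop :=
  (forall i j, 0 <= p i j) /\ forall i, \sum_j p i j = 1.

Definition cprob (N m : nat) (pe : 'I_N -> 'I_m -> R) (pd : 'I_N -> 'I_m -> 'I_2 -> R)
  (z : 'I_2) (x y : 'I_N) : R := \sum_mu pe x mu * pd y mu z.

Definition DC (N m : nat) (pe : 'I_N -> 'I_m -> R) : R :=
  N%:R^-1 * \sum_mu \big[Num.max/0]_x pe x mu.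

(* output z = 1 is encoded as ord0, z = 2 as (1 : 'I_2);
   G_y = [set x | G y x], N_x = #|G_x| *)
Definition success (N : nat) (G : rel 'I_N) (p : 'I_2 -> 'I_N -> 'I_N -> R) : R :=
  (\sum_x (#|[set x' | G x x']|)%:R + N%:R)^-1 *
  \sum_y (p ord0 y y + \sum_(x | G y x) p (1 : 'I_2) x y).

End Defs.

(* A perfect classical protocol can send a message mu only from inputs forming
   an independent set of G: if adjacent x and y both send mu, Bob holding x
   must answer 1 on mu (promise x = x) and also 2 on mu (promise y in G_x).
   Hence sum_x p_e(mu|x) <= alpha(G) max_x p_e(mu|x), and summing over mu gives
   alpha(G) D_C >= 1.  Quantumly, Alice sends |psi_x><psi_x| for an orthogonal
   representation in dimension beta(G), and Bob measures
   {|psi_y><psi_y|, 1 - |psi_y><psi_y|}, which is perfect; since every state is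
   a projector, tr(rho_x E_x) <= tr E_x, so D_Q <= beta(G) / N.  Dividing,
   D_C / D_Q >= (1 / alpha(G)) / (beta(G) / N). *)

From HB Require Import structures.
From mathcomp Require Import all_boot all_order all_algebra.
From mathcomp Require Import classical_sets reals complex.
From mathcomp Require Import lra.
Set Implicit Arguments. Unset Strict Implicit. Unset Printing Implicit Defensive.
Import Order.TTheory GRing.Theory Num.Theory.
Local Open Scope ring_scope.

Section EqualityGame.
Variables (R : realType) (N : nat) (G : rel 'I_N).
Implicit Types (p : 'I_2 -> 'I_N -> 'I_N -> R).

Definition success_weight : R := \sum_y (1 + \sum_(x | G y x) 1).

Definition success_score p : R :=
  \sum_y (p ord0 y y + \sum_(x | G y x) p 1 x y).

Lemma successE p : success G p = success_weight^-1 * success_score p.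
Proof.
congr (_^-1 * _); rewrite /success_weight big_split /= sumr_const card_ord addrC.
by congr (_ + _); apply: eq_bigr => y _; rewrite sumr_const cardsE.
Qed.

Lemma success_weight_gt0 : (0 < N)%N -> 0 < success_weight.
Proof.
move=> hN; rewrite /success_weight (bigD1 (Ordinal hN)) //=.
have sum1_ge0 P : 0 <= \sum_(x | P x) (1 : R) by rewrite sumr_ge0.
by rewrite ltr_wpDr ?ltr_pwDl ?sumr_ge0 // => y _; rewrite addr_ge0.
Qed.

Lemma success_eq1 p : (0 < N)%N ->
  (forall y, p ord0 y y = 1) -> (forall x y, G y x -> p 1 x y = 1) ->
  success G p = 1.
Proof.
move=> hN p_eq p_neq; rewrite successE.
have -> : success_score p = success_weight.
  apply: eq_bigr => y _; rewrite p_eq; congr (_ + _).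
  by apply: eq_bigr => x /p_neq.
by rewrite mulVf // gt_eqF // success_weight_gt0.
Qed.

Lemma success_score_leif p : (forall z x y, p z x y <= 1) ->
  success_score p <= success_weight ?= iff
    [forall y, (p ord0 y y == 1) && [forall (x | G y x), p 1 x y == 1]].
Proof.
move=> p_le1; apply: leif_sum => y _.
exact: leifD (leif_eq _) (leif_sum (fun x _ => leif_eq _)).
Qed.

Lemma success_eq1_perfect p : (forall z x y, p z x y <= 1) ->
  success G p = 1 ->
  (forall y, p ord0 y y = 1) /\ (forall x y, G y x -> p 1 x y = 1).
Proof.
move=> p_le1; rewrite successE => score_eq.
have weight_neq0 : success_weight != 0.
  by apply: contra_eq_neq score_eq => ->; rewrite invr0 mul0r eq_sym oner_neq0.
have /eqP : success_score p = success_weight.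
  by rewrite -[LHS](mulVKf weight_neq0) score_eq mulr1.
rewrite (success_score_leif p_le1) => /forallP perfect.
split=> [y | x y Gyx]; have /andP[/eqP p_eq /forall_inP p_neq] := perfect y.
  exact: p_eq.
exact/eqP/p_neq.
Qed.
End EqualityGame.

Lemma independent_card_le (N : nat) (G : rel 'I_N) (S : {set 'I_N}) :
  independent G S -> (#|S| <= alpha G)%N.
Proof. exact: leq_bigmax_cond. Qed.

Lemma sum_le_alpha_bigmax (R : realDomainType) (N : nat) (G : rel 'I_N)
    (F : 'I_N -> R) :
  independent G [set x | F x != 0] ->
  \sum_x F x <= (alpha G)%:R * \big[Num.max/0]_x F x.
Proof.
move=> indep; rewrite (bigID (fun x => F x != 0)) /= [X in _ + X]big1; last first.
  by move=> x /negPn /eqP.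
rewrite addr0 (le_trans (ler_sum _ (fun x _ => le_bigmax 0 F x))) //.
rewrite sumr_const -cardsE -[_ *+ _]mulr_natl ler_wpM2r ?bigmax_ge_id //.
by rewrite ler_nat independent_card_le.
Qed.

Lemma stoch_le1 (R : realType) (I J : finType) (p : I -> J -> R) i j :
  stoch p -> p i j <= 1.
Proof.
by case=> p_ge0 p_sum1; rewrite -(p_sum1 i) (bigD1 j) //= lerDl sumr_ge0.
Qed.

Lemma stoch2_sum (R : realType) (I : finType) (p : I -> 'I_2 -> R) i :
  stoch p -> p i ord0 + p i 1 = 1.
Proof.
case=> _ /(_ i); rewrite !big_ord_recl big_ord0 addr0 => <-.
by congr (_ + p i _); apply: val_inj.
Qed.

Section ClassicalProtocols.
Variables (R : realType) (N m : nat) (G : rel 'I_N).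
Variables (pe : 'I_N -> 'I_m -> R) (pd : 'I_N -> 'I_m -> 'I_2 -> R).
Hypothesis pe_stoch : stoch pe.

Lemma cprob_le1 z x y : (forall mu, pd y mu z <= 1) -> cprob pe pd z x y <= 1.
Proof.
case: pe_stoch => pe_ge0 pe_sum1 pd_le1; rewrite -(pe_sum1 x).
by apply: ler_sum => mu _; rewrite ler_piMr.
Qed.

Lemma cprob_eq1 z x y mu : (forall mu, pd y mu z <= 1) ->
  cprob pe pd z x y = 1 -> pe x mu != 0 -> pd y mu z = 1.
Proof.
case: pe_stoch => pe_ge0 pe_sum1 pd_le1 cprob1 pe_neq0.
have /eqP := cprob1; rewrite -[X in _ == X](pe_sum1 x).
rewrite (leif_sum (fun mu _ => leif_eq (ler_piMr (pe_ge0 x mu) (pd_le1 mu)))).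
move=> /forall_inP /(_ mu isT) /eqP; rewrite -[RHS]mulr1.
by move/(mulfI pe_neq0).
Qed.

Hypothesis pd_stoch : forall y, stoch (pd y).

Lemma perfect_message_support_independent mu :
  success G (cprob pe pd) = 1 -> independent G [set x | pe x mu != 0].
Proof.
have pd_le1 y z mu' : pd y mu' z <= 1 by apply: stoch_le1.
case/(success_eq1_perfect (fun z x y => cprob_le1 x (pd_le1 y z))) => c_eq c_neq.
apply/forall_inP => x; rewrite inE => pe_x; apply/forall_inP => y; rewrite inE.
move=> pe_y; apply/negP => Gxy.
have := stoch2_sum mu (pd_stoch x).
rewrite (cprob_eq1 (pd_le1 x ord0) (c_eq x) pe_x).
rewrite (cprob_eq1 (pd_le1 x 1) (c_neq y x Gxy) pe_y).
by move/eqP; rewrite -subr_eq0 addrK oner_eq0.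
Qed.

Lemma alpha_mul_DC_ge1 : (0 < N)%N ->
  success G (cprob pe pd) = 1 -> 1 <= (alpha G)%:R * DC pe.
Proof.
move=> hN perfect; rewrite /DC mulrCA ler_pdivlMl ?ltr0n // mulr1.
have -> : N%:R = \sum_x \sum_mu pe x mu.
  case: pe_stoch => _ pe_sum1.
  by under eq_bigr do rewrite pe_sum1; rewrite sumr_const card_ord.
rewrite exchange_big mulr_sumr; apply: ler_sum => mu _.
exact/sum_le_alpha_bigmax/perfect_message_support_independent.
Qed.
End ClassicalProtocols.

Section Hermitian.
Variable R : realType.
Local Notation C := R[i].
Local Open Scope sesquilinear_scope.

Lemma conjtrE k (A : 'M[C]_k) : conjtr A = A ^t*.
Proof. exact: map_trmx. Qed.

Lemma trmxC_mul m n p (A : 'M[C]_(m, n)) (B : 'M[C]_(n, p)) :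
  (A *m B) ^t* = B ^t* *m A ^t*.
Proof. by rewrite trmx_mul map_mxM. Qed.

Lemma trmxC_1B k (P : 'M[C]_k) : (1%:M - P) ^t* = 1%:M - P ^t*.
Proof. by rewrite linearB /= trmx1 map_mxB map_mx1. Qed.

Lemma innerE n (u v : 'cV[C]_n) : inner u v = (u ^t* *m v) 0 0.
Proof. by rewrite mxE; apply: eq_bigr => i _; rewrite !mxE. Qed.

Lemma inner_ge0 n (u : 'cV[C]_n) : 0 <= inner u u.
Proof. by apply: sumr_ge0 => i _; rewrite mulrC mul_conjC_ge0. Qed.

Lemma inner_mulmx n k (A : 'M[C]_(n, k)) u v :
  inner u (A *m v) = inner (A ^t* *m u) v.
Proof. by rewrite !innerE trmxC_mul trmxCK mulmxA. Qed.

Lemma psd1 k : psd (1%:M : 'M[C]_k).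
Proof.
by split=> [|v]; rewrite ?mul1mx ?inner_ge0 // conjtrE trmx1 map_mx1.
Qed.

Lemma psd0 k : psd (0 : 'M[C]_k).
Proof.
split=> [|v]; last by rewrite mul0mx /inner big1 // => i _; rewrite mxE mulr0.
by rewrite conjtrE trmx0 map_mx0.
Qed.

Lemma psd_congr n k (E : 'M[C]_k) (B : 'M[C]_(k, n)) :
  psd E -> psd (B ^t* *m E *m B).
Proof.
rewrite /psd !conjtrE => -[E_herm E_ge0]; split.
  by rewrite !trmxC_mul trmxCK E_herm mulmxA.
by move=> v; rewrite -!mulmxA inner_mulmx trmxCK.
Qed.

Lemma psd_tr_ge0 k (X : 'M[C]_k) : psd X -> 0 <= \tr X.
Proof.
case=> _ X_ge0; apply: sumr_ge0 => i _.
have := X_ge0 (delta_mx i 0); rewrite -colE /inner (bigD1 i) //= big1.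
  by rewrite !mxE !eqxx conjC1 mul1r addr0.
by move=> j nji; rewrite !mxE (negbTE nji) conjC0 mul0r.
Qed.

Definition orthoproj k (P : 'M[C]_k) := (P ^t* == P) && (P *m P == P).

Lemma orthoproj_psd k (P : 'M[C]_k) : orthoproj P -> psd P.
Proof.
case/andP => /eqP P_herm /eqP P_idem.
by rewrite -P_idem -{1}P_herm -[P ^t*]mulmx1; apply/psd_congr/psd1.
Qed.

Lemma orthoproj_1B k (P : 'M[C]_k) : orthoproj P -> orthoproj (1%:M - P).
Proof.
case/andP => /eqP P_herm /eqP P_idem; apply/andP; split.
  by rewrite trmxC_1B P_herm.
by rewrite mulmxBl mul1mx mulmxBr mulmx1 P_idem subrr subr0.
Qed.

(* tr E - tr (P E) = tr ((1 - P) E (1 - P)) >= 0 *)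
Lemma mxtrace_orthoprojM_le k (P E : 'M[C]_k) : orthoproj P -> psd E ->
  complex.Re (\tr (P *m E)) <= complex.Re (\tr E).
Proof.
move=> /orthoproj_1B /andP[/eqP Q_herm /eqP Q_idem] E_psd.
have := psd_tr_ge0 (psd_congr (1%:M - P) E_psd).
rewrite Q_herm mxtrace_mulC mulmxA Q_idem mulmxBl mul1mx raddfB /=.
by rewrite subr_ge0 lecE => /andP[_].
Qed.

Definition ketbra k (v : 'cV[C]_k) : 'M[C]_k := v *m v ^t*.

Lemma mxtrace_ketbra k (v : 'cV[C]_k) : \tr (ketbra v) = inner v v.
Proof. by rewrite mxtrace_mulC trace_mx11 innerE. Qed.

Lemma mxtrace_ketbraM k (u v : 'cV[C]_k) :
  \tr (ketbra u *m ketbra v) = inner v u * inner u v.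
Proof.
rewrite /ketbra mulmxA mxtrace_mulC trace_mx11 !mulmxA -(mulmxA _ _ v).
by rewrite [LHS]mxE big_ord1 !innerE.
Qed.

Lemma orthoproj_ketbra k (v : 'cV[C]_k) : inner v v = 1 -> orthoproj (ketbra v).
Proof.
move=> v_unit; apply/andP; split; first by rewrite /ketbra trmxC_mul trmxCK.
have vv : v ^t* *m v = 1%:M.
  by apply/matrixP => i j; rewrite !ord1 -innerE v_unit mxE.
by rewrite /ketbra mulmxA -(mulmxA v) vv mulmx1.
Qed.
End Hermitian.

Section QuantumDistinguishability.
Variables (R : realType) (N k : nat) (rho : 'I_N -> 'M[R[i]]_k).
Hypothesis rho_proj : forall x, orthoproj (rho x).

Lemma guess_le_dim (E : 'I_N -> 'M[R[i]]_k) : povm E ->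
  N%:R^-1 * \sum_x complex.Re (\tr (rho x *m E x)) <= k%:R / N%:R.
Proof.
case=> E_psd E_sum1; rewrite mulrC ler_wpM2r ?invr_ge0 //.
apply: le_trans (ler_sum _ (fun x _ => mxtrace_orthoprojM_le (rho_proj x) (E_psd x))) _.
by rewrite -!raddf_sum /= E_sum1 mxtrace1 raddfMn.
Qed.

Hypothesis hN : (0 < N)%N.
Let x0 := Ordinal hN.

Lemma povm_point : povm (fun x => if x == x0 then 1%:M else 0 : 'M[R[i]]_k).
Proof.
split=> [x|]; first by case: ifP => _; [apply: psd1 | apply: psd0].
by rewrite (bigD1 x0) //= big1 ?addr0 // => x /negbTE ->.
Qed.

Hypothesis rho_tr1 : forall x, \tr (rho x) = 1.

Lemma DQ_bounds : N%:R^-1 <= DQ rho <= k%:R / N%:R.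
Proof.
rewrite /DQ; set S := (X in sup X).
have S_ub : ubound S (k%:R / N%:R) by move=> _ [E [/guess_le_dim le_dim ->]].
have S_point : S N%:R^-1.
  exists (fun x => if x == x0 then 1%:M else 0); split; first exact: povm_point.
  rewrite (bigD1 x0) //= big1 => [|x /negbTE ->]; last by rewrite mulmx0 raddf0.
  by rewrite mulmx1 rho_tr1 addr0 mulr1.
apply/andP; split; first by apply: ub_le_sup => //; exists (k%:R / N%:R).
by apply: ge_sup => //; exists N%:R^-1.
Qed.
End QuantumDistinguishability.

Section OrthogonalRepresentationProtocol.
Variables (R : realType) (N k : nat) (G : rel 'I_N).
Variable psi : 'I_N -> 'cV[R[i]]_k.
Hypothesis psi_unit : forall x, inner (psi x) (psi x) = 1.
Hypothesis psi_orth : forall x y, G x y -> inner (psi x) (psi y) = 0.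

Lemma orth_rep_dim_gt0 : (0 < N)%N -> (0 < k)%N.
Proof.
move=> hN; case: k psi psi_unit => // psi' /(_ (Ordinal hN)).
by rewrite /inner big_ord0 => /eqP; rewrite eq_sym oner_eq0.
Qed.

Definition binary_test (P : 'M[R[i]]_k) (z : 'I_2) : 'M[R[i]]_k :=
  if z == ord0 then P else 1%:M - P.

Lemma povm_binary_test P : orthoproj P -> povm (binary_test P).
Proof.
move=> P_proj; split.
  by case=> -[|[|//]] ? /=; apply: orthoproj_psd; rewrite ?orthoproj_1B.
by rewrite !big_ord_recl big_ord0 /binary_test /= addr0 addrC subrK.
Qed.

Lemma orth_rep_success_eq1 : (0 < N)%N ->
  success G (qprob (fun x => ketbra (psi x))
                   (fun y => binary_test (ketbra (psi y)))) = 1.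
Proof.
move=> hN; apply: success_eq1 => // [y | x y Gyx].
  by rewrite /qprob /= mxtrace_ketbraM psi_unit mulr1.
rewrite /qprob /binary_test /= mulmxBr mulmx1 raddfB /= mxtrace_ketbra psi_unit.
by rewrite mxtrace_ketbraM psi_orth // mul0r subr0.
Qed.
End OrthogonalRepresentationProtocol.

Lemma ler_ratio_of_bounds (R : realFieldType) (n a b c q : R) :
  0 < n -> 0 < b -> 0 <= a -> 1 <= a * c -> 0 < q -> q <= b / n ->
  n / (a * b) <= c / q.
Proof.
move=> n_gt0 b_gt0 a_ge0 ac_ge1 q_gt0 q_le.
have a_gt0 : 0 < a.
  by rewrite lt_def a_ge0 andbT; apply: contraTneq ac_ge1 => ->; rewrite mul0r ler10.
rewrite ler_pdivlMr // mulrAC ler_pdivrMr ?mulr_gt0 //.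
move: q_le; rewrite ler_pdivlMr // => nq_le.
nra.
Qed.

Theorem theorem6 (R : realType) (N : nat) (hN : (0 < N)%N) (G : rel 'I_N)
    (Gsym : symmetric G) (Girr : irreflexive G) (b : nat) (hb : is_beta R G b) :
  exists (k : nat) (rho : 'I_N -> 'M[R[i]]_k) (M : 'I_N -> 'I_2 -> 'M[R[i]]_k),
    (forall x, density (rho x)) /\ (forall y, povm (M y)) /\
    success G (qprob rho M) = 1 /\
    forall (m : nat) (pe : 'I_N -> 'I_m -> R) (pd : 'I_N -> 'I_m -> 'I_2 -> R),
      stoch pe -> (forall y, stoch (pd y)) ->
      success G (cprob pe pd) = 1 ->
      N%:R / ((alpha G)%:R * b%:R) <= DC pe / DQ rho.
Proof.
case: hb => -[psi [psi_unit psi_orth]] _.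
have rho_proj x := orthoproj_ketbra (psi_unit x).
have rho_tr1 x : \tr (ketbra (psi x)) = 1 by rewrite mxtrace_ketbra psi_unit.
exists b, (fun x => ketbra (psi x)), (fun y => binary_test (ketbra (psi y))).
split; [|split; [|split]].
- by move=> x; split; [apply: orthoproj_psd | apply: rho_tr1].
- by move=> y; apply: povm_binary_test.
- exact: orth_rep_success_eq1.
move=> m pe pd pe_stoch pd_stoch perfect.
have /andP[DQ_ge DQ_le] := DQ_bounds rho_proj hN rho_tr1.
apply: ler_ratio_of_bounds DQ_le; rewrite ?ltr0n ?(orth_rep_dim_gt0 psi_unit) //.
- exact: alpha_mul_DC_ge1.
- by apply: lt_le_trans DQ_ge; rewrite invr_gt0 ltr0n.
Qed.
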